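(* For every finite word $\bar\alpha\in\{0,1\}^k$, $k\in\mathbb N$, the sets $F_{\bar\alpha}=T_{\bar\alpha}(I)$ and $\mathcal K_{\bar\alpha}$ are connected.
   Context: Let $I=[0,1]^3$. Let $\mathcal D_0=\{(i,2,2),(2,i,2),(2,2,i): i=0,1,2,3,4\}$ and $\mathcal D_1=\{d\in\{0,\ldots,4\}^3:\ \text{at least two coordinates of } d \text{ lie in }\{0,4\}\}$. For $i=0,1$ let $T_i(A)=\bigcup_{d\in\mathcal D_i}\frac{d+A}{5}$ for $A\subset\mathbb R^3$, and for $\bar\alpha=\alpha_1\cdots\alpha_k$ let $T_{\bar\alpha}=T_{\alpha_1}\circ\cdots\circ T_{\alpha_k}$. $\mathcal K_{\bar\alpha}$ is the unique non-empty compact set with $\mathcal K_{\bar\alpha}=T_{\bar\alpha}(\mathcal K_{\bar\alpha})$ (the attractor of the iterated function system whose Hutchinson operator is $T_{\bar\alpha}$). *)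

From HB Require Import structures.
From mathcomp Require Import all_boot all_order all_algebra.
From mathcomp Require Import all_classical all_reals all_analysis.
Set Implicit Arguments. Unset Strict Implicit. Unset Printing Implicit Defensive.
Import Order.TTheory GRing.Theory Num.Theory.
Import numFieldNormedType.Exports.
Local Open Scope classical_set_scope.
Local Open Scope ring_scope.

Definition cube (R : realType) : set 'rV[R]_3 :=
  [set x | forall j : 'I_3, 0 <= x ord0 j <= 1].

Definition digit := (nat * nat * nat)%type.

Definition dvec (R : realType) (d : digit) : 'rV[R]_3 :=
  \row_(j < 3) (match val j with
                | 0 => d.1.1 | 1 => d.1.2 | _ => d.2 end)%:R.

Definition D0 (d : digit) : Prop :=
  let: (a, b, c) := d in
  [\/ (a <= 4 /\ b = 2 /\ c = 2), (a = 2 /\ b <= 4 /\ c = 2)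
    | (a = 2 /\ b = 2 /\ c <= 4)]%N.

Definition edge (x : nat) : bool := (x == 0)%N || (x == 4)%N.

Definition D1 (d : digit) : Prop :=
  let: (a, b, c) := d in
  [/\ (a <= 4)%N, (b <= 4)%N, (c <= 4)%N &
      [|| edge a && edge b, edge a && edge c | edge b && edge c]].

(* Letter false encodes 0, true encodes 1. *)
Definition Dig (b : bool) : digit -> Prop := if b then D1 else D0.

Definition T (R : realType) (b : bool) (A : set 'rV[R]_3) : set 'rV[R]_3 :=
  [set y | exists d, Dig b d /\ exists2 a, A a & y = 5^-1 *: (dvec R d + a)].

Definition Tw (R : realType) (w : seq bool) (A : set 'rV[R]_3) : set 'rV[R]_3 :=
  foldr (@T R) A w.

Arguments cube R : clear implicits.
Arguments dvec R d : clear implicits.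

From HB Require Import structures.
From mathcomp Require Import all_boot all_order all_algebra.
From mathcomp Require Import all_classical all_reals all_analysis.
From mathcomp Require Import ring lra.
Import Order.TTheory GRing.Theory Num.Theory.
Import numFieldNormedType.Exports.
Local Open Scope classical_set_scope.
Local Open Scope ring_scope.
Set Implicit Arguments. Unset Strict Implicit. Unset Printing Implicit Defensive.

(* By induction on the word, F_w is connected and contains, for every
   coordinate direction e_j, two points a and a + e_j.  This invariant passes
   from A to T_i(A): the pieces (d + A)/5 and (d + e_j + A)/5 meet at
   (d + e_j + a)/5, the digit sets D_0 and D_1 are connected for this
   adjacency, and a pair of digits d, d + 4 e_j in D_i yields the points
   (d + a)/5 and (d + 4 e_j + a + e_j)/5 = (d + a)/5 + e_j of T_i(A).
   For an attractor K = T_w(K), n further applications of T_w move K and the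
   cube to within 5^(-n |w|) times a constant of each other, so K is a
   Hausdorff limit of the connected sets T_w^n(I); a compact set split into
   two parts at positive distance eps cannot be such a limit, since an
   eps/4-approximation would be split as well. *)

Definition chain_connected (I : Type) (D : set I) (r : I -> I -> Prop) (i0 : I) : Prop :=
  forall P : I -> Prop, P i0 ->
    (forall i j, D i -> D j -> r i j -> P i -> P j) -> forall i, D i -> P i.

Section Topology.
Variable T : topologicalType.

Lemma connected_bigcup_chain (I : Type) (D : set I) (A : I -> set T) i0 :
  D i0 -> A i0 !=set0 -> (forall i, D i -> connected (A i)) ->
  chain_connected D (fun i j => A i `&` A j !=set0) i0 ->
  connected (\bigcup_(i in D) A i).
Proof.
move=> Di0 [p Ap] cA link; set U := \bigcup_(i in D) A i.
have AU i : D i -> A i `<=` U by move=> Di x Aix; exists i.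
have AC : forall i, D i -> A i `<=` connected_component U p.
  apply: link => [|i j _ Dj [q [Aiq Ajq]] AiC].
    exact: connected_component_max Ap (AU _ Di0) (cA _ Di0).
  rewrite (same_connected_component (AiC q Aiq)).
  exact: connected_component_max Ajq (AU _ Dj) (cA _ Dj).
have <- : connected_component U p = U.
  apply/seteqP; split; first exact: connected_component_sub.
  by move=> x [i Di Aix]; exact: AC Di _ Aix.
exact: component_connected.
Qed.

Lemma open_disjoint_separated (A B : set T) :
  open A -> open B -> A `&` B = set0 -> separated A B.
Proof.
have closureI0 X Y : open Y -> X `&` Y = set0 -> closure X `&` Y = set0.
  move=> oY XY; apply/seteqP; split => // x [cXx Yx].
  by have := cXx Y (open_nbhs_nbhs (conj oY Yx)); rewrite XY => -[].
move=> oA oB AB; split; first exact: closureI0.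
by rewrite setIC; apply: closureI0; rewrite // setIC.
Qed.

End Topology.

Section NormedSpace.
Variables (R : realType) (V : normedModType R).

Lemma star_connected (A : set V) (c : V) :
  A c -> (forall x t, A x -> 0 <= t <= 1 -> A (c + t *: (x - c))) -> connected A.
Proof.
move=> Ac star.
have -> : A = \bigcup_(x in A) ((fun t : R => c + t *: (x - c)) @` `[0, 1]).
  apply/seteqP; split => [x Ax|y [x Ax [t t01 <-]]].
    exists x => //; exists 1; first by rewrite /= in_itv /= lexx ler01.
    by rewrite scale1r addrC subrK.
  by apply: star; move: t01; rewrite /= in_itv.
apply: bigcup_connected.
  exists c => x _; exists 0; last by rewrite scale0r addr0.
  by rewrite /= in_itv /= lexx ler01.
move=> x _; apply: connected_continuous_connected; first exact: segment_connected.
apply: continuous_subspaceT => t.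
change {for t, continuous (cst c + (fun t : R => t *: (x - c)))}.
apply: continuousD; first exact: cst_continuous.
exact: (@continuousZr_tmp _ _ _ (fun t => t)).
Qed.

Lemma dist_continuous : continuous (fun p : V * V => `|p.1 - p.2|).
Proof.
move=> p; change {for p, continuous (Num.norm \o ((@fst V V) - (@snd V V)))}.
apply: continuous_comp; last exact: norm_continuous.
by apply: continuousB; [exact: cvg_fst | exact: cvg_snd].
Qed.

Lemma separated_compact_gap (K E0 E1 : set V) : compact K ->
  K = E0 `|` E1 -> separated E0 E1 -> E0 !=set0 -> E1 !=set0 ->
  exists2 eps, 0 < eps & forall a b, E0 a -> E1 b -> eps <= `|a - b|.
Proof.
move=> cK KE sE [a0 E0a0] [b0 E1b0].
have closed_part A B : K = A `|` B -> closure A `&` B = set0 -> A = K `&` closure A.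
  move=> KAB cAB; apply/seteqP; split => [x Ax|x [Kx cAx]].
    by split; [rewrite KAB; left | exact: subset_closure].
  move: Kx; rewrite KAB => -[//|Bx].
  by have : (closure A `&` B) x by []; rewrite cAB.
have cE0 : compact E0.
  rewrite (closed_part E0 E1 KE sE.1).
  by apply: compact_closedI; [exact: cK | exact: closed_closure].
have cE1 : compact E1.
  rewrite (closed_part E1 E0); last by rewrite setIC sE.2.
    by apply: compact_closedI; [exact: cK | exact: closed_closure].
  by rewrite setUC.
have [c /[!inE] -[E0c E1c] cmin] := compact_EVT_min (A := E0 `*` E1)
  (ex_intro _ (a0, b0) (conj E0a0 E1b0)) (compact_setX cE0 cE1)
  (continuous_subspaceT dist_continuous).
exists `|c.1 - c.2|.
  rewrite normr_gt0 subr_eq0; apply/eqP => c12.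
  have := separated_disjoint sE; rewrite -subset0 => /(_ c.1); apply.
  by split; rewrite // c12.
by move=> a b E0a E1b; apply: (cmin (a, b)); rewrite inE.
Qed.

Lemma expr_mul_small (x C e : R) : 0 <= x < 1 -> 0 < C -> 0 < e ->
  exists n, x ^+ n * C <= e.
Proof.
move=> /andP[x0 x1] C0 e0; have x_lt1 : `|x| < 1 by rewrite ger0_norm.
have [N _ xN] := cvgr0_norm_lt _ (cvg_expr x_lt1) _ (divr_gt0 e0 C0).
exists N; have := xN N (leqnn N); rewrite /= ger0_norm ?exprn_ge0 //.
by rewrite ltr_pdivlMr // => /ltW.
Qed.

Definition within_dist (M : R) (A B : set V) :=
  forall a, A a -> exists2 b, B b & `|a - b| <= M.

Lemma within_distW (M M' : R) (A B : set V) :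
  M <= M' -> within_dist M A B -> within_dist M' A B.
Proof.
by move=> MM' AB a Aa; have [b Bb ab] := AB a Aa; exists b => //; exact: le_trans MM'.
Qed.

Lemma connected_of_approx (K : set V) : compact K ->
  (forall e, 0 < e -> exists2 F, connected F & within_dist e K F /\ within_dist e F K) ->
  connected K.
Proof.
move=> cK approx; apply/connectedP => E [En KE sE].
have [eps eps0 gap] := separated_compact_gap cK KE sE (En false) (En true).
have [F cF [KF FK]] := approx (eps / 4) (divr_gt0 eps0 (ltr0n _ 4)).
pose U b := \bigcup_(a in E b) ball a (eps / 2).
have U_open b : open (U b) by apply: bigcup_open => a _; exact: ball_open.
have U_disj y : U false y -> U true y -> False.
  move=> [a Ea]; rewrite -ball_normE /= => ay [b Eb].
  rewrite -ball_normE /= => yb; have := gap a b Ea Eb.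
  have := ler_distD y a b; rewrite (distrC y b); lra.
have sepU : separated (U false) (U true).
  apply: open_disjoint_separated => //.
  by apply/seteqP; split => // y [] /U_disj.
have FU : F `<=` U false `|` U true.
  move=> y /FK [k Kk yk]; have Uk : ball k (eps / 2) y.
    by rewrite -ball_normE /= distrC; lra.
  by move: Kk; rewrite KE => -[Ek|Ek]; [left|right]; exists k.
have FUb b : F `&` U b !=set0.
  have [a Ea] := En b; have Ka : K a by rewrite KE; case: b Ea; [right|left].
  have [y Fy ay] := KF a Ka; exists y; split => //; exists a => //.
  by rewrite -ball_normE /=; lra.
have [FU0|FU1] := connected_subset sepU FU cF.
- by have [y [Fy U1y]] := FUb true; apply: (U_disj y) => //; exact: FU0.
- by have [y [Fy U0y]] := FUb false; apply: (U_disj y) => //; exact: FU1.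
Qed.
End NormedSpace.

Section CubeIFS.
Variable R : realType.
Notation vec := 'rV[R]_3.

Definition dshift (d : digit) (n : nat) (j : 'I_3) : digit :=
  let: (a, b, c) := d in
  match val j with 0 => (a + n, b, c) | 1 => (a, b + n, c) | _ => (a, b, c + n) end%N.

Lemma dvec_dshift d n j : dvec R (dshift d n j) = dvec R d + n%:R *: delta_mx 0 j.
Proof.
case: d => [[a b] c]; apply/rowP => k; rewrite !mxE.
by case: j k => [[|[|[|j]]] Hj] // [[|[|[|k]]] Hk]; rewrite //= ?natrD ?mulr1 ?mulr0 ?addr0.
Qed.

Definition adjacent (d d' : digit) : Prop :=
  exists j, d' = dshift d 1 j \/ d = dshift d' 1 j.

Definition hub (b : bool) : digit := if b then (0, 0, 0)%N else (2, 2, 2)%N.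

Lemma Dig_hub b : Dig b (hub b).
Proof. by case: b; [split | apply: Or31]. Qed.

Section Lines.
Variables (D P : digit -> Prop).
Hypothesis P_adjacent : forall d d', D d -> D d' -> adjacent d d' -> P d -> P d'.

Lemma line_closed d j n k : (forall i, (i <= n)%N -> D (dshift d i j)) ->
  (k <= n)%N -> P (dshift d k j) -> forall i, (i <= n)%N -> P (dshift d i j).
Proof.
move=> Dline kn Pk.
have step i : (i < n)%N -> P (dshift d i j) <-> P (dshift d i.+1 j).
  move=> lt_in; have next : dshift d i.+1 j = dshift (dshift d i j) 1 j.
    by case: d {Dline Pk} => [[a b] c]; case: j => [[|[|[|]]] ?]; rewrite /= ?addn1 ?addnS.
  have Di : D (dshift d i j) by apply: Dline; exact: ltnW.
  have Di1 : D (dshift d i.+1 j) by exact: Dline.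
  by split; apply: P_adjacent => //; exists j; [left|right]; exact: next.
have to0 i : (i <= n)%N -> P (dshift d i j) <-> P (dshift d 0 j).
  by elim: i => [//|i IH] lt_in; rewrite -(step i lt_in) (IH (ltnW lt_in)).
by move=> i le_in; apply/(to0 i le_in)/(to0 k kn).
Qed.

End Lines.

Lemma Dig_chain_connected b : chain_connected (Dig b) adjacent (hub b).
Proof.
move=> P Phub Padj; pose line := line_closed Padj.
case: b Padj Phub line => Padj Phub line.
- (* Move first along the two coordinates lying in {0, 4}: every digit on the
     way keeps two coordinates in {0, 4}. *)
  move=> [[a b] c] [a4 b4 c4 /or3P[/andP[ea eb]|/andP[ea ec]|/andP[eb ec]]].
  + have Pa : P (a, 0, 0)%N.
      by apply: (line (0, 0, 0)%N ord0 4 0) => // i i4; split; rewrite //= ?orbT.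
    have Pb : P (a, b, 0)%N.
      by apply: (line (a, 0, 0)%N (lift ord0 ord0) 4 0) => // i i4; split; rewrite //= ea ?orbT.
    by apply: (line (a, b, 0)%N ord_max 4 0) => // i i4; split; rewrite //= ea eb.
  + have Pa : P (a, 0, 0)%N.
      by apply: (line (0, 0, 0)%N ord0 4 0) => // i i4; split; rewrite //= ?orbT.
    have Pc : P (a, 0, c)%N.
      by apply: (line (a, 0, 0)%N ord_max 4 0) => // i i4; split; rewrite //= ea ?orbT.
    by apply: (line (a, 0, c)%N (lift ord0 ord0) 4 0) => // i i4; split; rewrite //= ea ec ?orbT.
  + have Pb : P (0, b, 0)%N.
      by apply: (line (0, 0, 0)%N (lift ord0 ord0) 4 0) => // i i4; split; rewrite //= ?orbT.
    have Pc : P (0, b, c)%N.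
      by apply: (line (0, b, 0)%N ord_max 4 0) => // i i4; split; rewrite //= eb ?orbT.
    by apply: (line (0, b, c)%N ord0 4 0) => // i i4; split; rewrite //= eb ec ?orbT.
- move=> [[a b] c] /= [[a4 [-> ->]]|[-> [b4 ->]]|[-> [-> c4]]].
  + by apply: (line (0, 2, 2)%N ord0 4 2) => // i i4; apply: Or31.
  + by apply: (line (2, 0, 2)%N (lift ord0 ord0) 4 2) => // i i4; apply: Or32.
  + by apply: (line (2, 2, 0)%N ord_max 4 2) => // i i4; apply: Or33.
Qed.

Lemma Dig_opposite b j : exists2 d, Dig b d & Dig b (dshift d 4 j).
Proof.
case: b; first by exists (0, 0, 0)%N; case: j => [[|[|[|]]] ?]; split.
case: j => [[|[|[|]]] ?] //.
- by exists (0, 2, 2)%N; apply: Or31.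
- by exists (2, 0, 2)%N; apply: Or32.
- by exists (2, 2, 0)%N; apply: Or33.
Qed.

Definition piece (d : digit) (a : vec) : vec := 5^-1 *: (dvec R d + a).

Lemma piece_continuous d : continuous (piece d).
Proof.
move=> a; apply: continuousZl_tmp; apply: continuousD; first exact: cst_continuous.
exact: cvg_id.
Qed.

Lemma piece_dshift d n j a : piece (dshift d n j) a = piece d (a + n%:R *: delta_mx 0 j).
Proof. by rewrite /piece dvec_dshift addrAC addrA. Qed.

Lemma piece_translate d a v : piece d (a + 5 *: v) = piece d a + v.
Proof. by rewrite /piece addrA scalerDr scalerA mulVf ?scale1r ?pnatr_eq0. Qed.

Lemma piece_dist d a b : `|piece d a - piece d b| = 5^-1 * `|a - b|.
Proof.
rewrite /piece -scalerBr opprD addrACA subrr add0r normrZ.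
by rewrite ger0_norm // invr_ge0 ler0n.
Qed.

Lemma T_bigcup b (A : set vec) : T b A = \bigcup_(d in Dig b) (piece d @` A).
Proof.
apply/seteqP; split => [y [d [Dd [a Aa ->]]]|y [d Dd [a Aa <-]]].
  by exists d => //; exists a.
by exists d; split => //; exists a.
Qed.

Definition has_unit_steps (A : set vec) : Prop :=
  forall j, exists2 a, A a & A (a + delta_mx 0 j).

Lemma pieces_meet (A : set vec) d d' : has_unit_steps A -> adjacent d d' ->
  piece d @` A `&` piece d' @` A !=set0.
Proof.
move=> steps [j adj]; wlog -> : d d' adj / d' = dshift d 1 j.
  by move=> base; case: adj => eq_d; [|rewrite setIC]; apply: base => //; left.
have [a Aa Aaj] := steps j; exists (piece d (a + delta_mx 0 j)).
by split; [exists (a + delta_mx 0 j) | exists a; rewrite // piece_dshift scale1r].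
Qed.

Lemma T_connected b (A : set vec) : connected A -> has_unit_steps A -> connected (T b A).
Proof.
move=> cA steps; rewrite T_bigcup.
apply: (connected_bigcup_chain (Dig_hub b)).
- by have [a Aa _] := steps ord0; exists (piece (hub b) a); exists a.
- move=> d _; apply: connected_continuous_connected => //.
  exact/continuous_subspaceT/piece_continuous.
- move=> P Phub Pmeet; apply: Dig_chain_connected => // d d' Dd Dd' adj.
  by apply: Pmeet => //; exact: pieces_meet.
Qed.

Lemma T_unit_steps b (A : set vec) : has_unit_steps A -> has_unit_steps (T b A).
Proof.
move=> steps j; have [d Dd Dd4] := Dig_opposite b j; have [a Aa Aaj] := steps j.
rewrite T_bigcup; exists (piece d a); first by exists d => //; exists a.
exists (dshift d 4 j) => //; exists (a + delta_mx 0 j) => //.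
rewrite piece_dshift -piece_translate; congr piece.
by apply/rowP => k; rewrite !mxE; ring.
Qed.

Lemma Tw_connected_steps w (A : set vec) : connected A -> has_unit_steps A ->
  connected (Tw w A) /\ has_unit_steps (Tw w A).
Proof.
move=> cA steps; elim: w => [//|b w [cTw stepsTw]] /=.
by split; [exact: T_connected | exact: T_unit_steps].
Qed.

Lemma cube_connected : connected (cube R).
Proof.
apply: (@star_connected _ _ _ 0) => [j|x t cx /andP[t0 t1] j]; first by rewrite mxE lexx ler01.
rewrite add0r subr0 mxE; have /andP[x0 x1] := cx j.
by rewrite mulr_ge0 //= mulr_ile1.
Qed.

Lemma cube_unit_steps : has_unit_steps (cube R).
Proof.
move=> j; exists 0 => k; first by rewrite mxE lexx ler01.
by rewrite !mxE add0r; case: (k == j); rewrite /= ?mulr1n ?mulr0n ?lexx ?ler01.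
Qed.

Lemma cube_norm_le1 (x : vec) : cube R x -> `|x| <= 1.
Proof.
move=> cx; rewrite (_ : `|x| = mx_norm x) // mx_normrE.
apply: bigmax_le => // -[i j] _ /=; rewrite (ord1 i).
by have /andP[x0 x1] := cx j; rewrite ger0_norm.
Qed.

Lemma T_within b M (A B : set vec) :
  within_dist M A B -> within_dist (5^-1 * M) (T b A) (T b B).
Proof.
move=> AB y; rewrite T_bigcup => -[d Dd [a Aa <-]]; have [a' Ba' aa'] := AB a Aa.
exists (piece d a'); first by rewrite T_bigcup; exists d => //; exists a'.
by rewrite piece_dist ler_wpM2l // invr_ge0 ler0n.
Qed.

Lemma Tw_within w M (A B : set vec) : within_dist M A B ->
  within_dist ((5^-1) ^+ size w * M) (Tw w A) (Tw w B).
Proof.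
move=> AB; elim: w => [|b w IH] /=; first by rewrite expr0 mul1r.
by rewrite exprS -mulrA; exact: T_within.
Qed.

Lemma iter_Tw_within w n M (A B : set vec) : within_dist M A B ->
  within_dist (((5^-1) ^+ size w) ^+ n * M) (iter n (Tw w) A) (iter n (Tw w) B).
Proof.
move=> AB; elim: n => [|n IH] /=; first by rewrite expr0 mul1r.
by rewrite exprS -mulrA; exact: Tw_within.
Qed.

Lemma iter_Tw_connected_steps w n (A : set vec) : connected A -> has_unit_steps A ->
  connected (iter n (Tw w) A) /\ has_unit_steps (iter n (Tw w) A).
Proof.
move=> cA steps; elim: n => [//|n [cn stepsn]] /=.
exact: Tw_connected_steps.
Qed.

Lemma compact_cube_within (K : set vec) : K !=set0 -> compact K ->
  exists2 C, 0 < C & within_dist C K (cube R) /\ within_dist C (cube R) K.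
Proof.
move=> [a0 Ka0] cK; have [M [_ boundM]] := compact_bounded cK.
have Kbound k : K k -> `|k| <= `|M| + 1.
  by move=> Kk; apply: boundM Kk; rewrite (le_lt_trans (ler_norm M)) // ltrDl.
exists (`|M| + 2); first by rewrite ltr_wpDl.
split => [k Kk|y cy].
  exists 0; first by move=> j; rewrite mxE lexx ler01.
  by rewrite subr0 (le_trans (Kbound k Kk)) // lerD2l ler1n.
exists a0 => //; apply: le_trans (ler_normB _ _) _.
by have := cube_norm_le1 cy; have := Kbound a0 Ka0; lra.
Qed.

Lemma attractor_connected w (K : set vec) : w != [::] -> K !=set0 -> compact K ->
  K = Tw w K -> connected K.
Proof.
move=> w0 K0 cK fixK; have [C C0 [Kcube cubeK]] := compact_cube_within K0 cK.
apply: connected_of_approx cK _ => e e0.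
have rho01 : 0 <= (5^-1 : R) ^+ size w < 1.
  rewrite exprn_ge0 ?invr_ge0 //= exprn_ilt1 ?invr_ge0 ?size_eq0 //.
  by rewrite invf_lt1 ?ltr1n.
have [N rhoN] := expr_mul_small rho01 C0 e0.
exists (iter N (Tw w) (cube R)).
  by have [] := iter_Tw_connected_steps w N cube_connected cube_unit_steps.
rewrite -(iter_fix N (esym fixK)).
by split; apply: within_distW rhoN _; exact: iter_Tw_within.
Qed.

End CubeIFS.

Theorem lemma1 (R : realType) (w : seq bool) :
  connected (Tw w (cube R) : set 'rV[R]_3) /\
  (w != [::] ->
   forall K : set 'rV[R]_3,
     K !=set0 -> compact K -> K = Tw w K -> connected K).
Proof.
split; first by have [] := Tw_connected_steps w (@cube_connected R) (@cube_unit_steps R).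
by move=> w0 K; exact: attractor_connected.
Qed.
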